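(* Consider the two-stage robust problem $\min_{x\in\mathcal X}c_1x+\max_{u\in\mathcal U(x)}\min_{y\in\mathcal Y(x,u)}c_2y$ with decision-dependent uncertainty set $\mathcal U(x)=\{u\in\{0,1\}^{m_u}: Fu\le h,\ u\le x'\}$, where $x'\in\{0,1\}^{m_u}$ is a subvector of binary first-stage variables of $x$, and suppose the set $\mathcal U^0=\{u\in\{0,1\}^{m_u}: Fu\le h\}$ is downward closed (if $u^1\in\mathcal U^0$, $u^2\in\{0,1\}^{m_u}$ and $u^2\le u^1$ then $u^2\in\mathcal U^0$). Then this problem is equivalent to the decision-independent two-stage robust problem $\min_{x\in\mathcal X}c_1x+\max_{u\in\mathcal U^0}\min_{y\in\bar{\mathcal Y}(x,u)}c_2y$, where $\bar{\mathcal Y}(x,u)=\{y\in\mathbb Z^{m_y}_+\times\mathbb R^{n_y}_+: B_2y\ge d-B_1x-E(u\circ x')\}$; equivalently, with the recourse feasible set replaced by $\{(y,v)\in(\mathbb Z^{m_y}_+\times\mathbb R^{n_y}_+)\times\mathbb R^{m_u}_+: B_2y\ge d-B_1x-Ev,\ v\le x',\ v\le u,\ v\ge x'+u-\mathbf 1\}$.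
   Context: $\mathcal X=\{x\in\mathbb Z^{m_x}_+\times\mathbb R^{n_x}_+: Ax\ge b\}$ (containing the binary subvector $x'$), $\mathcal Y(x,u)=\{y\in\mathbb Z^{m_y}_+\times\mathbb R^{n_y}_+: B_2y\ge d-B_1x-Eu\}$. $a\circ b$ denotes the componentwise (Hadamard) product and $\mathbf 1$ the all-ones vector. The optimal value of an infeasible minimization (maximization) problem is $+\infty$ ($-\infty$). Two formulations are called equivalent if they have the same optimal value and any optimal first-stage solution of one is optimal for the other, and vice versa. *)

From HB Require Import structures.
From mathcomp Require Import all_boot all_order all_algebra.
From mathcomp Require Import boolp classical_sets reals constructive_ereal ereal.
Set Implicit Arguments. Unset Strict Implicit. Unset Printing Implicit Defensive.
Import Order.TTheory GRing.Theory Num.Theory.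
Local Open Scope ring_scope.
Local Open Scope classical_set_scope.

Section Defs.
Variable R : realType.

Definition lev (n : nat) (u v : 'cV[R]_n) : Prop := forall i, u i 0 <= v i 0.

Definition binvec (n : nat) (u : 'cV[R]_n) : Prop :=
  forall i, u i 0 = 0 \/ u i 0 = 1.

Definition mixint (m n : nat) (z : 'cV[R]_(m + n)) : Prop :=
  forall i : 'I_(m + n), 0 <= z i 0 /\ ((i < m)%N -> z i 0 \is a Num.int).

Definition xsub (N mu : nat) (sel : 'I_mu -> 'I_N) (x : 'cV[R]_N) : 'cV[R]_mu :=
  \col_j x (sel j) 0.

Definition hadamard (n : nat) (u v : 'cV[R]_n) : 'cV[R]_n := \col_j (u j 0 * v j 0).

Definition Xset (mx nx p : nat) (A : 'M[R]_(p, mx + nx)) (b : 'cV[R]_p) :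
  set 'cV[R]_(mx + nx) := [set x | mixint x /\ lev b (A *m x)].

Definition U0set (mu r : nat) (F : 'M[R]_(r, mu)) (h : 'cV[R]_r) : set 'cV[R]_mu :=
  [set u | binvec u /\ lev (F *m u) h].

Definition Uset (N mu r : nat) (F : 'M[R]_(r, mu)) (h : 'cV[R]_r)
  (sel : 'I_mu -> 'I_N) (x : 'cV[R]_N) : set 'cV[R]_mu :=
  [set u | binvec u /\ lev (F *m u) h /\ lev u (xsub sel x)].

Definition Yset (N mu q my ny : nat) (B1 : 'M[R]_(q, N)) (B2 : 'M[R]_(q, my + ny))
  (E : 'M[R]_(q, mu)) (d : 'cV[R]_q) (x : 'cV[R]_N) (u : 'cV[R]_mu) :
  set 'cV[R]_(my + ny) :=
  [set y | mixint y /\ lev (d - B1 *m x - E *m u) (B2 *m y)].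

Definition Ybarset (N mu q my ny : nat) (B1 : 'M[R]_(q, N)) (B2 : 'M[R]_(q, my + ny))
  (E : 'M[R]_(q, mu)) (d : 'cV[R]_q) (sel : 'I_mu -> 'I_N)
  (x : 'cV[R]_N) (u : 'cV[R]_mu) : set 'cV[R]_(my + ny) :=
  [set y | mixint y /\ lev (d - B1 *m x - E *m hadamard u (xsub sel x)) (B2 *m y)].

Definition YVset (N mu q my ny : nat) (B1 : 'M[R]_(q, N)) (B2 : 'M[R]_(q, my + ny))
  (E : 'M[R]_(q, mu)) (d : 'cV[R]_q) (sel : 'I_mu -> 'I_N)
  (x : 'cV[R]_N) (u : 'cV[R]_mu) : set ('cV[R]_(my + ny) * 'cV[R]_mu) :=
  [set yv | mixint yv.1 /\ lev 0 yv.2 /\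
            lev (d - B1 *m x - E *m yv.2) (B2 *m yv.1) /\
            lev yv.2 (xsub sel x) /\ lev yv.2 u /\
            lev (xsub sel x + u - const_mx 1) yv.2].

Definition lin (n : nat) (c : 'rV[R]_n) (z : 'cV[R]_n) : R := (c *m z) 0 0.

(* objective of a two-stage robust problem at first-stage x:
   c1 x + sup_{u in U} inf_{w in W u} cost w   (sup of empty = -oo, inf of empty = +oo) *)
Definition twostage_obj (N : nat) (U W : Type) (c1 : 'rV[R]_N) (x : 'cV[R]_N)
  (Uc : set U) (Wc : U -> set W) (cost : W -> R) : \bar R :=
  ((lin c1 x)%:E + ereal_sup [set ereal_inf [set (cost w)%:E | w in Wc u] | u in Uc])%E.

Definition optval (T : Type) (X : set T) (f : T -> \bar R) : \bar R :=
  ereal_inf [set f x | x in X].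

Definition optimal (T : Type) (X : set T) (f : T -> \bar R) (x : T) : Prop :=
  X x /\ f x = optval X f.

Definition equivalent (T : Type) (X : set T) (f g : T -> \bar R) : Prop :=
  optval X f = optval X g /\ (forall x, optimal X f x <-> optimal X g x).

End Defs.

From HB Require Import structures.
From mathcomp Require Import all_boot all_order all_algebra.
From mathcomp Require Import boolp classical_sets reals constructive_ereal ereal.
From mathcomp Require Import lra.
Set Implicit Arguments. Unset Strict Implicit. Unset Printing Implicit Defensive.
Import Order.TTheory GRing.Theory Num.Theory.
Local Open Scope ring_scope.
Local Open Scope classical_set_scope.

(* For a feasible first stage x the subvector x' is binary.  Then u |-> u o x'
   maps U^0 into U(x) by downward closedness, and onto it because it fixes every
   u <= x'; moreover Ybar(x, u) is literally Y(x, u o x').  So both problems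
   take the supremum of the same set of recourse values, and their objectives
   agree on X.  For binary x' and u the McCormick inequalities v <= x', v <= u,
   v >= x' + u - 1, v >= 0 force v = u o x', so projecting the linearized
   recourse set onto y gives back Ybar(x, u). *)

Section BinaryHadamard.
Variables (R : realType) (n : nat) (u x : 'cV[R]_n).
Hypotheses (bin_u : binvec u) (bin_x : binvec x).

Lemma binvec_hadamard : binvec (hadamard u x).
Proof.
by move=> i; rewrite mxE; case: (bin_u i) => ->; case: (bin_x i) => ->;
  rewrite ?mul0r ?mul1r; [left | left | left | right].
Qed.

Lemma hadamard_id_le : lev u x -> hadamard u x = u.
Proof.
move=> le_ux; apply/matrixP => i j; rewrite (ord1 j) mxE.
by move: (le_ux i); case: (bin_u i) => ->; case: (bin_x i) => ->; lra.
Qed.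

Lemma mccormickP (v : 'cV[R]_n) :
  [/\ lev 0 v, lev v x, lev v u & lev (x + u - const_mx 1) v] <->
  v = hadamard u x.
Proof.
split=> [[ge0_v le_vx le_vu ge_v] | ->].
  apply/matrixP => i j; rewrite (ord1 j) mxE.
  move: (ge0_v i) (le_vx i) (le_vu i) (ge_v i); rewrite !mxE.
  by case: (bin_u i) => ->; case: (bin_x i) => ->; lra.
by split=> i; rewrite !mxE; case: (bin_u i) => ->; case: (bin_x i) => ->; lra.
Qed.

End BinaryHadamard.

Definition downward_closed (R : realType) (n : nat) (S : set 'cV[R]_n) :=
  forall u1 u2, S u1 -> binvec u2 -> lev u2 u1 -> S u2.

Section FixedFirstStage.
Variables (R : realType) (N mu : nat) (sel : 'I_mu -> 'I_N) (x : 'cV[R]_N).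
Hypothesis bin_x' : binvec (xsub sel x).

Lemma hadamard_U0set r (F : 'M[R]_(r, mu)) (h : 'cV[R]_r) :
  downward_closed (U0set F h) ->
  [set hadamard u (xsub sel x) | u in U0set F h] = Uset F h sel x.
Proof.
move=> U0_down; apply/seteqP; split.
  move=> _ [u [bin_u le_Fu] <-].
  have [_ le_x' le_u _] := (mccormickP bin_u bin_x' _).2 erefl.
  have [bin_ux' le_Fux'] := U0_down _ _ (conj bin_u le_Fu)
    (binvec_hadamard bin_u bin_x') le_u.
  by split.
move=> u [bin_u [le_Fu le_ux']]; exists u; first by split.
exact: hadamard_id_le.
Qed.

Lemma fst_YVset q my ny (B1 : 'M[R]_(q, N)) (B2 : 'M[R]_(q, my + ny))
    (E : 'M[R]_(q, mu)) (d : 'cV[R]_q) (u : 'cV[R]_mu) :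
  binvec u -> fst @` YVset B1 B2 E d sel x u = Ybarset B1 B2 E d sel x u.
Proof.
move=> bin_u; apply/seteqP; split.
  move=> _ [[y v] [int_y [ge0_v [feas [le_vx' [le_vu ge_v]]]]] <-] /=.
  have v_had := (mccormickP bin_u bin_x' v).1 (And4 ge0_v le_vx' le_vu ge_v).
  by move: feas; rewrite v_had.
move=> y [int_y feas]; exists (y, hadamard u (xsub sel x)) => //.
by have [] := (mccormickP bin_u bin_x' _).2 erefl.
Qed.

End FixedFirstStage.

Lemma twostage_obj_image (R : realType) (N : nat) (U V W W' : Type)
    (c1 : 'rV[R]_N) (x : 'cV[R]_N) (Uc : set U) (Vc : set V)
    (Wc : U -> set W) (Wc' : V -> set W') (cost : W -> R) (cost' : W' -> R)
    (phi : U -> V) :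
  phi @` Uc = Vc ->
  (forall u, Uc u ->
     [set (cost w)%:E | w in Wc u] = [set (cost' w)%:E | w in Wc' (phi u)]) ->
  twostage_obj c1 x Uc Wc cost = twostage_obj c1 x Vc Wc' cost'.
Proof.
move=> <- same_values; rewrite /twostage_obj image_comp.
by congr (_ + _)%E; congr ereal_sup; apply: eq_imagel => u /same_values ->.
Qed.

Lemma equivalent_eq (R : realType) (T : Type) (X : set T) (f g : T -> \bar R) :
  (forall x, X x -> f x = g x) -> equivalent X f g.
Proof.
move=> fg; have optv : optval X f = optval X g.
  by rewrite /optval; congr ereal_inf; exact: eq_imagel.
by split=> // x; rewrite /optimal -optv; split=> -[Xx <-]; rewrite fg.
Qed.

Theorem proposition3 (R : realType) (mx nx my ny mu p q r : nat)
  (A : 'M[R]_(p, mx + nx)) (b : 'cV[R]_p)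
  (B1 : 'M[R]_(q, mx + nx)) (B2 : 'M[R]_(q, my + ny)) (E : 'M[R]_(q, mu))
  (d : 'cV[R]_q) (F : 'M[R]_(r, mu)) (h : 'cV[R]_r)
  (c1 : 'rV[R]_(mx + nx)) (c2 : 'rV[R]_(my + ny))
  (sel : 'I_mu -> 'I_(mx + nx))
  (* x' is a subvector of binary first-stage variables of x *)
  (sel_inj : injective sel)
  (sel_int : forall j, (sel j < mx)%N)
  (sel_bin : forall x, Xset A b x -> binvec (xsub sel x))
  (* U^0 is downward closed *)
  (U0_down : forall u1 u2 : 'cV[R]_mu, U0set F h u1 -> binvec u2 -> lev u2 u1 ->
             U0set F h u2) :
  let f := fun x => twostage_obj c1 x (Uset F h sel x) (Yset B1 B2 E d x) (lin c2) in
  let g := fun x => twostage_obj c1 x (U0set F h) (Ybarset B1 B2 E d sel x) (lin c2) in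
  let g' := fun x => twostage_obj c1 x (U0set F h) (YVset B1 B2 E d sel x)
                       (fun yv => lin c2 yv.1) in
  equivalent (Xset A b) f g /\ equivalent (Xset A b) f g'.
Proof.
move=> f g g'.
have fg x : Xset A b x -> f x = g x.
  move=> /sel_bin bin_x'; apply/esym.
  by apply: twostage_obj_image (hadamard_U0set bin_x' U0_down) _.
have gg' x : Xset A b x -> g x = g' x.
  move=> /sel_bin bin_x'; apply: twostage_obj_image (image_id _) _.
  by move=> u [bin_u _]; rewrite -(fst_YVset bin_x' B1 B2 E d bin_u) image_comp.
split; apply: equivalent_eq => x Xx; first exact: fg.
by rewrite fg // gg'.
Qed.
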